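(* Let $b:X\times X\to[0,\infty)$ on a countable set $X$ be such that $(b,0)$ is a locally finite, connected graph, and let $G$ be a nilpotent group acting cocompactly on $X$ such that $H_{b,0}$ is $G$-invariant. Then every bounded harmonic function (i.e. bounded $f$ with $H_{b,0}f=0$) is constant.
   Context: A graph over $X$ is $(b,c)$ with $\sum_yb(x,y)<\infty$ for all $x$ ($b$ need not be symmetric); here $c=0$. Locally finite: each $x$ has finitely many $y$ with $b(x,y)>0$; connected: any $x,z$ are joined by a finite sequence $y_1,\dots,y_n$ with $b(y_i,y_{i+1})>0$. $H_{b,0}f(x)=\sum_yb(x,y)(f(x)-f(y))$. $T_gf(x)=f(g^{-1}x)$; cocompact: $GV=X$ for some finite $V$; $H$ is $G$-invariant if $T_g$ preserves its domain $\{f:\sum_yb(x,y)|f(y)|<\infty\ \forall x\}$ and $HT_g=T_gH$ for all $g$. *)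

From HB Require Import structures.
From mathcomp Require Import all_boot all_order all_algebra.
From mathcomp Require Import monoid.
From mathcomp Require Import all_classical all_reals all_analysis.
Set Implicit Arguments. Unset Strict Implicit. Unset Printing Implicit Defensive.
Import Order.TTheory GRing.Theory Num.Theory.
Local Open Scope classical_set_scope.
Local Open Scope ring_scope.

Section GroupDefs.
Variable G : groupType.

Definition gen_subgroup (S : G -> Prop) : G -> Prop :=
  fun x => forall H : G -> Prop,
    H monoid.one ->
    (forall a b, H a -> H b -> H (monoid.mul a b)) ->
    (forall a, H a -> H (monoid.inv a)) ->
    (forall a, S a -> H a) -> H x.

Fixpoint lower_central (n : nat) : G -> Prop :=
  match n with
  | 0 => fun _ => True
  | n'.+1 => gen_subgroup (fun z => exists x y,
               lower_central n' x /\ z = monoid.commg x y)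
  end.

Definition nilpotent_group : Prop :=
  exists n, forall x, lower_central n x -> x = monoid.one.
End GroupDefs.

Definition is_action (G : groupType) (X : Type) (act : G -> X -> X) : Prop :=
  (forall x, act monoid.one x = x) /\
  (forall g h x, act (monoid.mul g h) x = act g (act h x)).

Definition cocompact (G : groupType) (X : eqType) (act : G -> X -> X) : Prop :=
  exists V : seq X, forall x, exists g v, v \in V /\ x = act g v.

Definition transl (G : groupType) (X R : Type) (act : G -> X -> X)
  (g : G) (f : X -> R) : X -> R := fun x => f (act (monoid.inv g) x).

Section Graphs.
Variables (R : realType) (X : countType).

Definition is_graph (b : X -> X -> R) : Prop :=
  (forall x y, 0 <= b x y) /\
  (forall x, (\esum_(y in [set: X]) (b x y)%:E < +oo)%E).

Definition locally_finite (b : X -> X -> R) : Prop :=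
  forall x, finite_set [set y | 0 < b x y].

Definition connected_graph (b : X -> X -> R) : Prop :=
  forall x z, exists s : seq X,
    path (fun u v => 0 < b u v) x s /\ last x s = z.

Definition lap_domain (b : X -> X -> R) (f : X -> R) : Prop :=
  forall x, (\esum_(y in [set: X]) (b x y * `|f y|)%:E < +oo)%E.

(* H_{b,0} f (x) = sum_y b(x,y) (f x - f y); a finitely supported sum
   (the graphs considered here are locally finite) *)
Definition lap (b : X -> X -> R) (f : X -> R) : X -> R :=
  fun x => \sum_(y \in [set: X]) (b x y * (f x - f y)).

Definition lap_invariant (G : groupType) (act : G -> X -> X)
  (b : X -> X -> R) : Prop :=
  forall g : G,
    (forall f, lap_domain b f -> lap_domain b (transl act g f)) /\
    (forall f, lap_domain b f -> lap b (transl act g f) = transl act g (lap b f)).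
End Graphs.

(* Every element of G acts trivially on bounded harmonic functions.  For a
   nilpotent group this follows by descending induction along the lower
   central series, once it is known for every g whose commutators [g, k] act
   trivially.  For such a g the translation T_g commutes with every T_k on
   bounded harmonic functions, so all translates of h = T_g u - u are harmonic,
   and the Harnack inequality on the finite set V with G V = X gives
   s - h (g^-1 y) <= C (s - h y) for s = sup h.  If s > 0, then starting close
   to the supremum the increments of u along y, g^-1 y, g^-2 y, ... stay above
   s / 2 for arbitrarily many steps, which contradicts the boundedness of u.
   Hence T_g u <= u, and T_g u = u by symmetry.  A G-invariant function
   attains its maximum on V, and by the maximum principle (Harnack along a
   path) a harmonic function attaining its maximum is constant. *)

From HB Require Import structures.
From mathcomp Require Import all_boot all_order all_algebra.
From mathcomp Require Import monoid.
From mathcomp Require Import all_classical all_reals all_analysis.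
From mathcomp Require Import ring lra.

Set Implicit Arguments.
Unset Strict Implicit.
Unset Printing Implicit Defensive.

Import Order.TTheory GRing.Theory Num.Theory.
Local Open Scope ring_scope.

Lemma bounded_subr_le (R : realDomainType) (T : Type) (u : T -> R) (M : R) :
  (forall x, `|u x| <= M) -> forall x y, u x - u y <= M + M.
Proof.
move=> uM x y; apply: le_trans (ler_norm _) _.
by apply: le_trans (ler_normB _ _) _; apply: lerD.
Qed.

Lemma increment_gap (R : archiRealFieldType) (T : Type) (u : T -> R)
    (t : T -> T) (M s D : R) :
  (forall x, `|u x| <= M) -> 0 < s -> 1 <= D ->
  (forall y, s - (u (t (t y)) - u (t y)) <= D * (s - (u (t y) - u y))) ->
  exists2 e, 0 < e & forall y, u (t y) - u y <= s - e.
Proof.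
move=> uM s_gt0 D_ge1 step; pose h y := u (t y) - u y.
have D_gt0 : 0 < D by apply: lt_le_trans D_ge1.
have iter_step j y : s - h (iter j t y) <= D ^+ j * (s - h y).
  elim: j => [|j IHj]; first by rewrite expr0 mul1r.
  by rewrite iterS exprS -mulrA; apply: le_trans (step _) _; rewrite ler_pM2l.
(* Chosen so that n increments above [s / 2] exceed the oscillation [2 M]. *)
pose n := (Num.truncn (4 * M / s)).+1.
have n_big : 4 * M < n%:R * s by rewrite -ltr_pdivrMr ?truncnS_gt.
have Dn_gt0 : 0 < D ^+ n by rewrite exprn_gt0.
exists (s / (2 * D ^+ n)); first by rewrite divr_gt0 ?mulr_gt0.
move=> y; rewrite leNgt; apply/negP => hy_big.
have hy_near : D ^+ n * (s - h y) < s / 2.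
  have : (s - h y) * (2 * D ^+ n) < s.
    by rewrite -ltr_pdivlMr ?mulr_gt0 // /h; lra.
  nra.
have far j : (j < n)%N -> s / 2 < h (iter j t y).
  move=> jn; suff : s - h (iter j t y) < s / 2 by lra.
  apply: le_lt_trans (iter_step j y) _.
  have [hy_le|hy_pos] := leP (s - h y) 0.
    apply: le_lt_trans (_ : 0 < s / 2); last lra.
    by rewrite mulr_ge0_le0 // exprn_ge0 // ltW.
  by apply: le_lt_trans hy_near; rewrite ler_pM2r // ler_weXn2l // ltnW.
have sum_far : n%:R * (s / 2) <= u (iter n t y) - u y.
  rewrite -(telescope_sumr (fun k => u (iter k t y)) (leq0n n)).
  rewrite -[n in n%:R]subn0 mulr_natl -sumr_const_nat.
  by apply: ler_sum_nat => j /= jn; apply/ltW/far.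
have := bounded_subr_le uM (iter n t y) y; nra.
Qed.

Lemma seq_argmax d (T : choiceType) (R : orderType d) (f : T -> R) a V :
  exists2 v0, v0 \in a :: V & forall w, w \in a :: V -> (f w <= f v0)%O.
Proof.
pose w0 : seq_sub (a :: V) := SeqSub (mem_head a V).
have [v0 _ v0_max] := arg_maxP (fun w => f (ssval w)) (erefl true : predT w0).
exists (ssval v0) => [|w wV]; first exact: ssvalP.
exact: (v0_max (SeqSub wV)).
Qed.

Lemma mulVg_commg (G : groupType) (g k : G) :
  (g^-1 * k = [~ g, k^-1] * (k * g^-1))%g.
Proof. by rewrite commgEl conjgE invgK !mulgA mulgVK mulgK. Qed.

Lemma act_invK (G : groupType) (X : Type) (act : G -> X -> X) :
  is_action act -> forall g x, act g^-1%g (act g x) = x.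
Proof. by move=> [act1 actM] g x; rewrite -actM mulVg act1. Qed.

Section Harnack.
Variables (R : realType) (X : countType) (b : X -> X -> R).
Hypotheses (b_ge0 : forall x y, 0 <= b x y) (b_lf : locally_finite b).

Definition neighbours x : seq X :=
  finmap.enum_fset (fset_set [set y | 0 < b x y]).

Lemma mem_neighbours x y : 0 < b x y -> y \in neighbours x.
Proof. by move=> bxy; rewrite in_fset_set //; apply/mem_set. Qed.

Lemma lapE f x : lap b f x = \sum_(y <- neighbours x) b x y * (f x - f y).
Proof.
rewrite /lap /neighbours -fsbig_finite //.
apply/esym/fsbig_widen => // y [_ /=] /negP.
rewrite lt_neqAle b_ge0 andbT negbK.
by move/eqP=> <-; rewrite mul0r.
Qed.

Lemma lapB f1 f2 x : lap b (fun z => f1 z - f2 z) x = lap b f1 x - lap b f2 x.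
Proof.
rewrite !lapE -sumrB; apply: eq_bigr => y _.
by rewrite -mulrBr; congr (_ * _); ring.
Qed.

Lemma lapN f x : lap b (fun z => - f z) x = - lap b f x.
Proof.
rewrite !lapE -sumrN; apply: eq_bigr => y _.
by rewrite -mulrN; congr (_ * _); ring.
Qed.

Definition is_harmonic f := forall x, lap b f x = 0.

Lemma is_harmonicB f1 f2 :
  is_harmonic f1 -> is_harmonic f2 -> is_harmonic (fun z => f1 z - f2 z).
Proof. by move=> h1 h2 x; rewrite lapB h1 h2 subr0. Qed.

(* [s - f] ranges over all nonnegative harmonic functions. *)
Definition harnack x z C := forall s f,
  (forall w, f w <= s) -> is_harmonic f -> s - f z <= C * (s - f x).

Definition degree x := \sum_(y <- neighbours x) b x y.

Lemma harnack_edge x y : 0 < b x y -> harnack x y (degree x / b x y).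
Proof.
move=> bxy s f f_le_s f_harm.
have sum_eq : \sum_(z <- neighbours x) b x z * (s - f z) = degree x * (s - f x).
  rewrite /degree mulr_suml.
  transitivity (\sum_(z <- neighbours x)
    (b x z * (s - f x) + b x z * (f x - f z))).
    by apply: eq_bigr => z _; ring.
  by rewrite big_split /= -lapE f_harm addr0.
have term_le : b x y * (s - f y) <= degree x * (s - f x).
  rewrite -sum_eq (bigD1_seq y) ?mem_neighbours ?finmap.fset_uniq //= lerDl.
  by apply: sumr_ge0 => z _; rewrite mulr_ge0 // subr_ge0.
by rewrite mulrAC ler_pdivlMr // mulrC.
Qed.

Lemma harnack_trans x y z C D :
  0 <= D -> harnack x y C -> harnack y z D -> harnack x z (D * C).
Proof.
move=> D_ge0 Hxy Hyz s f f_le_s f_harm.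
rewrite -mulrA; apply: le_trans (Hyz _ _ f_le_s f_harm) _.
by rewrite ler_wpM2l // Hxy.
Qed.

Lemma harnack_le x z C D : C <= D -> harnack x z C -> harnack x z D.
Proof.
move=> CD Hxz s f f_le_s f_harm; apply: le_trans (Hxz _ _ f_le_s f_harm) _.
by rewrite ler_wpM2r // subr_ge0.
Qed.

Lemma harnack_path x p : path (fun u v => 0 < b u v) x p ->
  exists2 C, 0 <= C & harnack x (last x p) C.
Proof.
elim: p x => [|y p IHp] x /=.
  by move=> _; exists 1 => // s f _ _; rewrite mul1r.
move=> /andP[bxy /IHp[C C_ge0 HC]]; exists (C * (degree x / b x y)).
  by rewrite mulr_ge0 // divr_ge0 ?sumr_ge0 // ltW.
exact: harnack_trans C_ge0 (harnack_edge bxy) HC.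
Qed.

Hypothesis b_connected : connected_graph b.

Lemma harnack_connected x z : exists2 C, 0 <= C & harnack x z C.
Proof. by have [p [xp <-]] := b_connected x z; exact: harnack_path. Qed.

Lemma harnack_uniform (t : X -> X) (V : seq X) :
  exists2 C, 1 <= C & forall v, v \in V -> harnack v (t v) C.
Proof.
elim: V => [|v V [C C_ge1 HC]]; first by exists 1.
have [Cv Cv_ge0 HCv] := harnack_connected v (t v).
have C_ge0 : 0 <= C by apply: le_trans C_ge1.
exists (C + Cv) => [|w]; first by rewrite -[1]addr0 lerD.
rewrite inE => /predU1P[->|wV]; apply: harnack_le; [|exact: HCv| |exact: HC wV].
- by rewrite lerDr.
- by rewrite lerDl.
Qed.

Lemma harmonic_max_const f v0 :
  is_harmonic f -> (forall z, f z <= f v0) -> forall x, f x = f v0.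
Proof.
move=> f_harm f_max x; have [C _ HC] := harnack_connected v0 x.
have := HC _ _ f_max f_harm; rewrite subrr mulr0 subr_le0 => f_ge.
by apply/le_anti; rewrite f_max.
Qed.

End Harnack.

Section Invariance.
Variables (R : realType) (X : countType) (b : X -> X -> R).
Variables (G : groupType) (act : G -> X -> X).
Hypotheses (b_ge0 : forall x y, 0 <= b x y) (b_lf : locally_finite b).
Hypotheses (b_connected : connected_graph b) (act_action : is_action act).
Hypotheses (act_cocompact : cocompact act) (lap_inv : lap_invariant act b).

Definition bounded_harmonic f :=
  [/\ (exists M, forall x, `|f x| <= M), lap_domain b f & is_harmonic b f].

Lemma bounded_harmonic_transl g f :
  bounded_harmonic f -> bounded_harmonic (transl act g f).
Proof.
case=> [[M fM] f_dom f_harm]; have [dom_transl lap_transl] := lap_inv g.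
split; [by exists M => x; apply: fM | exact: dom_transl |].
by move=> x; rewrite lap_transl // /transl f_harm.
Qed.

Lemma bounded_harmonic_opp f :
  bounded_harmonic f -> bounded_harmonic (fun x => - f x).
Proof.
case=> [[M fM] f_dom f_harm]; split; first by exists M => x; rewrite normrN.
  by move=> x; under eq_esum do rewrite normrN; exact: f_dom.
by move=> x; rewrite lapN // f_harm oppr0.
Qed.

Definition fixes_harmonic g :=
  forall u, bounded_harmonic u -> forall x, u (act g x) = u x.

Section CommutatorsFixing.
Variable g : G.
Hypothesis commg_fixes : forall k, fixes_harmonic [~ g, k]%g.

Lemma translate_commute u : bounded_harmonic u ->
  forall k x, u (act g^-1%g (act k x)) = u (act k (act g^-1%g x)).
Proof.
move=> u_bh k x; have [_ actM] := act_action.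
by rewrite -actM mulVg_commg actM (commg_fixes _ u_bh) actM.
Qed.

Lemma harnack_displacement u : bounded_harmonic u ->
  exists2 C, 1 <= C & forall s,
    (forall z, u (act g^-1%g z) - u z <= s) -> forall y,
    s - (u (act g^-1%g (act g^-1%g y)) - u (act g^-1%g y))
      <= C * (s - (u (act g^-1%g y) - u y)).
Proof.
move=> u_bh; pose t := act g^-1%g; pose h z := u (t z) - u z.
have [V cover] := act_cocompact.
have [C C_ge1 HC] := harnack_uniform b_ge0 b_lf b_connected t V.
exists C => // s h_le_s y; have [k [v [vV ->]]] := cover y.
pose uk := transl act k^-1%g u.
have ukE z : uk z = u (act k z) by rewrite /uk /transl invgK.
have uk_bh : bounded_harmonic uk by exact: bounded_harmonic_transl.
have h_transl : (fun z => h (act k z)) = (fun z => transl act g uk z - uk z).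
  apply/funext => z.
  by rewrite /h /t /transl !ukE (translate_commute u_bh).
have h_tk z : h (t (act k z)) = h (act k (t z)).
  have [_ actM] := act_action.
  rewrite /h /t; have := translate_commute u_bh (g^-1 * k)%g z.
  by rewrite !actM => ->; rewrite (translate_commute u_bh k z).
have hk_harm : is_harmonic b (fun z => h (act k z)).
  rewrite h_transl; apply: (is_harmonicB b_ge0 b_lf).
    by case: (bounded_harmonic_transl g uk_bh).
  by case: uk_bh.
change (s - h (t (act k v)) <= C * (s - h (act k v))); rewrite h_tk.
exact: HC v vV s _ (fun w => h_le_s _) hk_harm.
Qed.

Lemma transl_harmonic_le u : bounded_harmonic u ->
  forall x, u (act g^-1%g x) <= u x.
Proof.
move=> u_bh x0; have [[M uM] _ _] := u_bh.
pose h z := u (act g^-1%g z) - u z.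
rewrite -subr_le0 -/(h x0) leNgt; apply/negP => h_pos.
have h_sup : has_sup (range h).
  split; first by exists (h x0), x0.
  by exists (M + M) => _ [z _ <-]; exact: bounded_subr_le.
have h_le_sup z : h z <= sup (range h).
  by apply: sup_upper_bound => //; exists z.
have sup_gt0 : 0 < sup (range h) := lt_le_trans h_pos (h_le_sup x0).
have [C C_ge1 HC] := harnack_displacement u_bh.
have [e e_gt0 h_gap] := increment_gap uM sup_gt0 C_ge1 (HC _ h_le_sup).
have [_ [y _ <-]] := sup_adherent e_gt0 h_sup.
by rewrite ltNge h_gap.
Qed.

Lemma fixes_of_commutators : fixes_harmonic g.
Proof.
move=> u u_bh x; have invK := act_invK act_action g.
have le_ux := transl_harmonic_le u_bh (act g x).
have := transl_harmonic_le (bounded_harmonic_opp u_bh) (act g x).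
by rewrite !invK lerN2 in le_ux * => ge_ux; apply/le_anti; rewrite ge_ux le_ux.
Qed.

End CommutatorsFixing.

Lemma nilpotent_fixes_harmonic :
  nilpotent_group G -> forall g, fixes_harmonic g.
Proof.
move=> [n central_n].
suff lcs_fixes m :
    (m <= n)%N -> forall g, lower_central (n - m) g -> fixes_harmonic g.
  by move=> g; apply: (lcs_fixes n) => //; rewrite subnn.
elim: m => [_ g|m IHm m_lt_n g g_lcs].
  by rewrite subn0 => /central_n -> u _ x; case: act_action => ->.
apply: fixes_of_commutators => k; apply: IHm (ltnW m_lt_n) _ _.
by rewrite -subnSK // => H _ _ _; apply; exists g, k.
Qed.
End Invariance.

Theorem corollary4 (R : realType) (X : countType) (b : X -> X -> R)
  (G : groupType) (act : G -> X -> X) :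
  is_graph b -> locally_finite b -> connected_graph b ->
  nilpotent_group G -> is_action act -> cocompact act ->
  lap_invariant act b ->
  forall f : X -> R,
    (exists M : R, forall x, `|f x| <= M) ->
    lap_domain b f ->
    (forall x, lap b f x = 0) ->
    exists c : R, forall x, f x = c.
Proof.
move=> [b_ge0 _] b_lf b_conn G_nil act_action act_cocompact lap_inv.
move=> f f_bdd f_dom f_harm.
have f_inv g := nilpotent_fixes_harmonic b_ge0 b_lf b_conn act_action
  act_cocompact lap_inv G_nil g (And3 f_bdd f_dom f_harm).
have [[|a V] cover] := act_cocompact.
  by exists 0 => x; have [g [v []]] := cover x.
have [v0 _ v0_max] := seq_argmax f a V.
exists (f v0); apply: (harmonic_max_const b_ge0 b_lf b_conn f_harm) => x.
by have [g [v [vV ->]]] := cover x; rewrite f_inv v0_max.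
Qed.
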